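(* Let $(X,d)$ be a metric space, $m,L\in\mathbb{N}$, $a_0,\dots,a_{m-1}\ge0$ with $\sum_{i=0}^{m-1}a_i<1$, and let $\mathcal{S}=(X,(\phi_j)_{j=1}^L,(p_j)_{j=1}^L)$ be a GIFS with probabilities of order $m$ consisting of $(a_0,\dots,a_{m-1})$-contractions. Then the map $\overline{M}_\mathcal{S}:\mathcal{P}(X)\to\mathcal{P}(X)$, $\overline{M}_\mathcal{S}(\mu):=M_\mathcal{S}(\mu,\dots,\mu)$, is a Banach contraction with respect to $d_{MK}$, with Lipschitz constant $\mathrm{Lip}(\overline{M}_\mathcal{S})\le\sum_{i=0}^{m-1}a_i$.
   Context: $X^m$ carries the maximum metric. A map $f:X^m\to X$ is an $(a_0,\dots,a_{m-1})$-contraction if $d(f(x_0,\dots,x_{m-1}),f(y_0,\dots,y_{m-1}))\le\sum_{i}a_i d(x_i,y_i)$. A GIFS with probabilities of order $m$ is $(X,(\phi_j)_{j=1}^L,(p_j)_{j=1}^L)$ with continuous $\phi_j:X^m\to X$ and $p_j>0$, $\sum_j p_j=1$. $\mathcal{P}(X)$ is the set of Borel probability measures on $X$ with compact support. $w^\sharp\mu(B):=\mu(w^{-1}(B))$. $M_\mathcal{S}(\mu_0,\dots,\mu_{m-1}):=\sum_{j}p_j\phi_j^\sharp(\mu_0\times\dots\times\mu_{m-1})$. $d_{MK}(\mu,\nu)=\sup\{|\int f d\mu-\int f d\nu|: \mathrm{Lip}(f)\le1\}$. A Banach contraction is a map with Lipschitz constant $<1$. *)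

From HB Require Import structures.
From mathcomp Require Import all_boot all_order all_algebra.
From mathcomp Require Import all_classical all_reals all_analysis.
Set Implicit Arguments. Unset Strict Implicit. Unset Printing Implicit Defensive.
Import Order.TTheory GRing.Theory Num.Theory.
Import numFieldNormedType.Exports.
Local Open Scope classical_set_scope.
Local Open Scope ring_scope.

Section defs.
Variables (R : realType) (X : metricType R).

End defs.

(* The library's sigma-algebra construction needs a pointed carrier; we
   equip X with a point x0 through an alias (the point plays no other role). *)
Definition ptX (R : realType) (X : metricType R) (x0 : X) : Type := X.
HB.instance Definition _ (R : realType) (X : metricType R) (x0 : X) :=
  Choice.on (ptX x0).
HB.instance Definition _ (R : realType) (X : metricType R) (x0 : X) :=
  isPointed.Build (ptX x0) x0.
Definition ptXm (R : realType) (X : metricType R) (x0 : X) (m : nat) : Type :=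
  'I_m -> X.
HB.instance Definition _ (R : realType) (X : metricType R) (x0 : X) m :=
  Choice.on (ptXm x0 m).
HB.instance Definition _ (R : realType) (X : metricType R) (x0 : X) m :=
  isPointed.Build (ptXm x0 m) (fun _ => x0).

Section defs.
Variables (R : realType) (X : metricType R).

Notation BorelX x0 := (@g_sigma_algebraType (ptX x0) (@open X)).

Definition maxm_open (m : nat) (A : set ('I_m -> X)) : Prop :=
  forall x, A x -> exists2 e : R, 0 < e &
    forall y : 'I_m -> X, (forall i, mdist (x i) (y i) < e) -> A y.

Notation BorelXm x0 m := (@g_sigma_algebraType (ptXm x0 m) (@maxm_open m)).

Definition maxm_continuous (m : nat) (f : ('I_m -> X) -> X) : Prop :=
  forall x (e : R), 0 < e -> exists2 d : R, 0 < d &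
    forall y, (forall i, mdist (x i) (y i) < d) -> mdist (f x) (f y) < e.

Definition gifs_contraction (m : nat) (a : 'I_m -> R) (f : ('I_m -> X) -> X) :=
  forall x y : 'I_m -> X, mdist (f x) (f y) <= \sum_(i < m) a i * mdist (x i) (y i).

Definition in_PX (x0 : X) (mu : {measure set (BorelX x0) -> \bar R}) : Prop :=
  mu setT = 1%E /\ exists K : set X, compact K /\ mu (~` K) = 0%E.

Definition is_product_measure (x0 : X) (m : nat) (mus : 'I_m -> {measure set (BorelX x0) -> \bar R})
  (pi : {measure set (BorelXm x0 m) -> \bar R}) : Prop :=
  forall B : 'I_m -> set X, (forall i, measurable (B i : set (BorelX x0))) ->
    pi [set x : 'I_m -> X | forall i, B i (x i)] = (\prod_(i < m) mus i (B i))%E.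

Definition Lip1 (f : X -> R) : Prop := forall x y, `|f x - f y| <= mdist x y.

Definition dMK (x0 : X) (mu nu : {measure set (BorelX x0) -> \bar R}) : \bar R :=
  ereal_sup [set (`| \int[mu]_x (f x)%:E - \int[nu]_x (f x)%:E |)%E | f in Lip1].

End defs.

Notation BorelX x0 := (@g_sigma_algebraType (ptX x0) (@open _)).
Notation BorelXm x0 m := (@g_sigma_algebraType (ptXm x0 m) (@maxm_open _ _ m)).

(* Both measures live on a compact set K, and their images under the GIFS
   operator on the compact set K' := U_j phi_j (K^m).  Cut K and K' into
   finitely many Borel pieces of radius < delta.  Integrals of a 1-Lipschitz f
   against M mu are then, up to O(delta), Riemann sums
   sum_j p_j sum_k f (phi_j (c_k0, ..., c_k(m-1))) prod_i mu (P_ki),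
   because mu^m gives product weight to the cells P_k0 x ... x P_k(m-1).  The
   difference of the product weights of mu and of nu telescopes into m terms in
   each of which a single coordinate i changes; the i-th term tests mu - nu
   against a function of the centres which is a_i-Lipschitz, so after a
   McShane extension it is bounded by a_i d_MK (mu, nu) + O(delta). *)

From HB Require Import structures.
From mathcomp Require Import all_boot all_order all_algebra finmap.
From mathcomp Require Import all_classical all_reals all_analysis.
From mathcomp Require Import perm measurable_realfun.
From mathcomp Require Import ring lra.
Import Order.TTheory GRing.Theory Num.Theory.
Local Open Scope classical_set_scope.
Local Open Scope ring_scope.

Set Implicit Arguments. Unset Strict Implicit.

Section borel.
Context {R : realType} {X : metricType R} (x0 : X).

Definition rectangle m (B : 'I_m -> set X) : set ('I_m -> X) :=
  [set x | forall i, B i (x i)].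

Lemma open_mdistP (U : set X) : open U <->
  (forall x, U x -> exists2 e : R, 0 < e & forall y, mdist x y < e -> U y).
Proof.
rewrite openE; split => [oU x /oU /nbhs_ballP [e e0 he]|oU x /oU [e e0 he]].
  by exists e => // y hy; apply: he; rewrite ballEmdist.
by apply/nbhs_ballP; exists e => // y; rewrite ballEmdist; apply: he.
Qed.

Lemma measurable_open (U : set X) : open U -> measurable (U : set (BorelX x0)).
Proof. exact: sub_sigma_algebra. Qed.

Lemma measurable_compact (K : set X) :
  compact K -> measurable (K : set (BorelX x0)).
Proof.
move=> /(compact_closed (@metric_hausdorff R X)) clK.
rewrite -[K]setCK; apply: measurableC; apply: measurable_open.
exact: closed_openC.
Qed.

Lemma measurable_maxm_continuous m (f : ('I_m -> X) -> X) :
  maxm_continuous f -> measurable_fun setT (f : BorelXm x0 m -> BorelX x0).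
Proof.
move=> cf.
apply: (@measurability _ _ (BorelXm x0 m) (BorelX x0) _ _ (@open X)) => //.
move=> _ [U /open_mdistP oU <-]; rewrite setTI; apply: sub_sigma_algebra.
move=> x /oU [e e0 he]; have [d d0 hd] := cf x e e0.
by exists d => // y /hd /he.
Qed.

Lemma measurable_rectangle m (B : 'I_m -> set X) :
  (forall i, measurable (B i : set (BorelX x0))) ->
  measurable (rectangle B : set (BorelXm x0 m)).
Proof.
move=> mB; have -> : rectangle B = \bigcap_i ((fun x => x i) @^-1` B i).
  by apply/seteqP; split => x hx i //=; apply: hx.
apply: fin_bigcap_measurable => [|i _]; first exact: finite_finset.
rewrite -[_ @^-1` _]setTI.
apply: (measurable_maxm_continuous (f := fun x => x i)) => // x e e0.
by exists e.
Qed.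

Lemma measurable_Lip1 (h : X -> R) :
  Lip1 h -> measurable_fun setT (h : BorelX x0 -> R).
Proof.
move=> lh.
apply: (@measurability _ _ (BorelX x0) R _ _ _ (RGenOpens.measurableE R)).
move=> _ [_ [a [b ->]] <-]; rewrite setTI.
apply: measurable_open; apply/open_mdistP.
move=> x /=; rewrite in_itv /= => /andP [ax xb].
exists (Num.min (h x - a) (b - h x)); first by rewrite lt_min !subr_gt0 ax xb.
move=> y; rewrite lt_min => /andP [h1 h2].
have := lh x y; rewrite ler_norml in_itv /= => /andP [l1 l2].
apply/andP; split; lra.
Qed.

End borel.

Lemma bigcup_index_enum (T : Type) (I : finType) (F : I -> set T) :
  \bigcup_i F i = \big[setU/set0]_(i <- index_enum I) F i.
Proof.
rewrite -bigcup_seq; apply/seteqP; split => x [i _ Fix]; exists i => //.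
exact: mem_index_enum.
Qed.

Section ae_partition.
Context d (T : measurableType d) (R : realType) (rho : {measure set T -> \bar R}).

Definition ae_partition (I : Type) (P : I -> set T) :=
  [/\ forall i, measurable (P i), trivIset setT P & rho (~` \bigcup_i P i) = 0%E].

Lemma measurable_bigcup_finType (I : finType) (P : I -> set T) :
  (forall i, measurable (P i)) -> measurable (\bigcup_i P i).
Proof. by move=> mP; apply: fin_bigcup_measurable => //; exact: finite_finset. Qed.

Lemma measure_bigcup_finType (I : finType) (P : I -> set T) :
  (forall i, measurable (P i)) -> trivIset setT P ->
  rho (\bigcup_i P i) = (\sum_i rho (P i))%E.
Proof.
move=> mP tP; rewrite measure_fin_bigcup //; last exact: finite_finset.
have -> : [set: I] = [set` index_enum I].
  by apply/seteqP; split => i // _; exact: mem_index_enum.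
by rewrite -fsbig_seq ?index_enum_uniq.
Qed.

Lemma ae_partition_measure (I : finType) (P : I -> set T) (G : set T) :
  ae_partition P -> measurable G -> rho G = (\sum_i rho (G `&` P i))%E.
Proof.
move=> [mP tP nP] mG; have mU := measurable_bigcup_finType mP.
rewrite (measureDI rho mG mU) (@subset_measure0 _ _ _ rho _ (~` \bigcup_i P i)) //.
- rewrite add0e setI_bigcupr; apply: measure_bigcup_finType.
    by move=> i; apply: measurableI.
  exact: trivIset_setIl.
- exact: measurableD.
- exact: measurableC.
Qed.

Section probability.
Hypothesis rho1 : rho setT = 1%E.

Lemma fin_num_prob (A : set T) : measurable A -> rho A \is a fin_num.
Proof.
move=> mA; rewrite ge0_fin_numE ?measure_ge0 //.
apply: (@le_lt_trans _ _ (rho setT)); last by rewrite rho1 ltry.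
by apply: le_measure; rewrite ?inE.
Qed.

Lemma prob_setC (A : set T) : measurable A -> rho (~` A) = (1 - rho A)%E.
Proof.
move=> mA; rewrite -setTD (measureD measurableT mA).
  by congr (_ - _)%E; [exact: rho1 | congr (rho _); exact: setTI].
by have := fin_num_prob measurableT; rewrite ge0_fin_numE ?measure_ge0.
Qed.

Lemma prob_setC_eq0 (A : set T) : measurable A -> rho (~` A) = 0%E <-> rho A = 1%E.
Proof.
move=> mA; rewrite prob_setC //; split => [/eqP|->]; last exact: subee.
by rewrite sube_eq ?fin_num_prob ?adde_defined ?add0e // => /eqP <-.
Qed.

Lemma ae_partition_fine (I : finType) (P : I -> set T) (G : set T) :
  ae_partition P -> measurable G ->
  fine (rho G) = \sum_i fine (rho (G `&` P i)).
Proof.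
move=> hP mG; have [mP _ _] := hP; apply: EFin_inj.
rewrite EFin_sum_fine => [|i _]; last by apply: fin_num_prob; apply: measurableI.
by rewrite fineK ?fin_num_prob // (ae_partition_measure hP mG).
Qed.

Lemma ae_partition_sum1 (I : finType) (P : I -> set T) :
  ae_partition P -> \sum_i fine (rho (P i)) = 1.
Proof.
move=> hP; rewrite -[RHS]/(fine 1%E) -rho1 (ae_partition_fine hP measurableT).
by apply: eq_bigr => i _; rewrite setTI.
Qed.

Lemma ae_partition_sum_diff (I J : finType) (A : I -> set T) (B : J -> set T)
    (alpha : I -> R) (beta : J -> R) (delta : R) :
  ae_partition A -> ae_partition B ->
  (forall i j x, A i x -> B j x -> `|alpha i - beta j| <= delta) ->
  `|\sum_i alpha i * fine (rho (A i)) - \sum_j beta j * fine (rho (B j))|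
    <= delta.
Proof.
move=> hA hB hab; have [mA _ _] := hA; have [mB _ _] := hB.
pose w i j := fine (rho (A i `&` B j)).
have -> : \sum_i alpha i * fine (rho (A i)) = \sum_i \sum_j alpha i * w i j.
  by apply: eq_bigr => i _; rewrite (ae_partition_fine hB (mA i)) mulr_sumr.
have -> : \sum_j beta j * fine (rho (B j)) = \sum_i \sum_j beta j * w i j.
  rewrite exchange_big; apply: eq_bigr => j _.
  rewrite (ae_partition_fine hA (mB j)) mulr_sumr.
  by apply: eq_bigr => i _; rewrite /w setIC.
rewrite -sumrB; apply: (le_trans (ler_norm_sum _ _ _)).
apply: (@le_trans _ _ (\sum_i delta * fine (rho (A i)))); last first.
  by rewrite -mulr_sumr ae_partition_sum1 ?mulr1.
apply: ler_sum => i _; rewrite -sumrB (ae_partition_fine hB (mA i)) mulr_sumr.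
apply: (le_trans (ler_norm_sum _ _ _)); apply: ler_sum => j _.
rewrite /w -mulrBl normrM (ger0_norm (fine_ge0 (measure_ge0 _ _))).
have [->|/set0P [x [Aix Bjx]]] := eqVneq (A i `&` B j) set0.
  by rewrite (_ : fine (rho set0) = 0) ?mulr0 // measure0.
by apply: ler_wpM2r; [exact: fine_ge0 | exact: hab Aix Bjx].
Qed.

Lemma integrable_bounded (A : set T) (h : T -> R) (b : R) :
  measurable A -> measurable_fun A h -> (forall x, A x -> `|h x| <= b) ->
  rho.-integrable A (EFin \o h).
Proof.
move=> mA mh hb; apply: measurable_bounded_integrable => //.
  by rewrite -ge0_fin_numE ?measure_ge0 ?fin_num_prob.
exists b; split; first exact: num_real.
by move=> M bM x Ax; rewrite /= (le_trans (hb x Ax)) ?ltW.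
Qed.

Lemma integral_near_cst (A : set T) (h : T -> R) (y delta : R) :
  measurable A -> measurable_fun A h -> 0 <= delta ->
  (forall x, A x -> `|h x - y| <= delta) ->
  (\int[rho]_(x in A) (h x)%:E)%E \is a fin_num /\
  `|fine (\int[rho]_(x in A) (h x)%:E)%E - y * fine (rho A)|
    <= delta * fine (rho A).
Proof.
move=> mA mh delta0 hy.
have ih : rho.-integrable A (EFin \o h).
  apply: (integrable_bounded (b := `|y| + delta)) => // x /hy hx.
  by rewrite -[h x](subrK y) (le_trans (ler_normD _ _)) // addrC lerD2l.
have iy : rho.-integrable A (EFin \o cst y).
  by apply: (integrable_bounded (b := `|y|)) => //; exact: measurable_cst.
have ihy : (\int[rho]_(x in A) (h x)%:E - (y * fine (rho A))%:E =
    \int[rho]_(x in A) (h x - y)%:E)%E.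
  rewrite integralB_EFin // EFinM fineK ?fin_num_prob //.
  by rewrite (integral_cst rho mA).
have fin_h := integrable_fin_num mA ih; split => //.
rewrite -lee_fin EFinM -abse_EFin EFinB fineK // ihy fineK ?fin_num_prob //.
have mhy : measurable_fun A (fun x => (h x - y)%:E).
  by apply/measurable_EFinP; apply: measurable_funB => //; exact: measurable_cst.
apply: (le_trans (le_abse_integral _ mA mhy)); apply: integral_le_bound => //.
by apply: aeW => x Ax /=; rewrite lee_fin hy.
Qed.

Lemma integral_ae_partition (I : finType) (P : I -> set T) (h : T -> R)
    (y : I -> R) (delta : R) :
  ae_partition P -> measurable_fun setT h -> 0 <= delta ->
  (forall i x, P i x -> `|h x - y i| <= delta) ->
  exists2 r, (\int[rho]_x (h x)%:E)%E = r%:E &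
    `|r - \sum_i y i * fine (rho (P i))| <= delta.
Proof.
move=> hP mh delta0 hy; have [mP tP nP] := hP.
set U := \bigcup_i P i; have mU : measurable U := measurable_bigcup_finType mP.
have approx i := integral_near_cst (mP i) (measurable_funS measurableT (subsetT _) mh)
  delta0 (hy i).
have hT : rho.-integrable setT (EFin \o h).
  apply/(negligible_integrable (measurableC mU)) => //; first exact/measurable_EFinP.
  rewrite setTD setCK; apply: (integrable_bounded (b := \sum_i `|y i| + delta)) => //.
    exact: (measurable_funS measurableT (subsetT _) mh).
  move=> x [i _ /[dup] Pix /hy hx]; rewrite -[h x](subrK (y i)) addrC.
  apply: (le_trans (ler_normD _ _)); apply: lerD => //.
  by rewrite (bigD1 i) //= lerDl sumr_ge0.
exists (\sum_i fine (\int[rho]_(x in P i) (h x)%:E)%E).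
  rewrite (negligible_integral (measurableC mU) measurableT hT nP) setTD setCK.
  rewrite /U bigcup_index_enum integral_bigsetU_EFin ?index_enum_uniq //.
  - by rewrite -sumEFin; apply: eq_bigr => i _; rewrite fineK //; case: (approx i).
  - exact: sub_trivIset tP.
  - by apply/measurable_EFinP; exact: (measurable_funS measurableT (subsetT _) mh).
rewrite -sumrB; apply: (le_trans (ler_norm_sum _ _ _)).
rewrite -[delta]mulr1 -(ae_partition_sum1 hP) mulr_sumr.
by apply: ler_sum => i _; case: (approx i).
Qed.

End probability.
End ae_partition.

(* [compact_cover] requires a pointed space. *)
Definition pointed_metric (R : realType) (X : metricType R) (x0 : X) : Type := X.
HB.instance Definition _ (R : realType) (X : metricType R) (x0 : X) :=
  Metric.on (pointed_metric x0).
HB.instance Definition _ (R : realType) (X : metricType R) (x0 : X) :=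
  isPointed.Build (pointed_metric x0) x0.

Section compact_partition.
Context {R : realType} {X : metricType R} (x0 : X).

Definition centred_partition (K : set X) (delta : R) (N : nat)
    (c : 'I_N -> X) (P : 'I_N -> set X) :=
  [/\ forall k, measurable (P k : set (BorelX x0)), trivIset setT P,
      \bigcup_k P k = K & forall k x, P k x -> mdist (c k) x < delta].

Lemma compact_centred_partition (K : set X) (delta : R) :
  compact K -> 0 < delta ->
  exists N (c : 'I_N -> X) (P : 'I_N -> set X), centred_partition K delta c P.
Proof.
move=> cK delta0; pose B (y : X) := (@ball _ X y delta)°.
have : @compact (pointed_metric x0) K := cK.
rewrite compact_cover => /(_ X K B) [y _|x Kx|D _ cov].
- exact: open_interior.
- by exists x => //; exact: nbhsx_ballx.
set s := (D : seq X); exists (size s), (nth x0 s).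
exists (fun k : 'I_(size s) => K `&` B (nth x0 s k) `\`
  \bigcup_(l in [set l : 'I_(size s) | (l < k)%N]) B (nth x0 s l)); split.
- move=> k; apply: measurableD.
    apply: measurableI; first exact: measurable_compact.
    by apply: measurable_open; exact: open_interior.
  apply: fin_bigcup_measurable => [|l _]; first exact: finite_finset.
  by apply: measurable_open; exact: open_interior.
- move=> k l _ _ [x [[[_ Bkx] nk] [[_ Blx] nl]]]; apply: val_inj.
  by case: (ltngtP k l) => // [kl|lk]; [case: nl; exists k | case: nk; exists l].
- apply/seteqP; split => [x [k _ [[]]] //|x Kx].
  have [y Dy Byx] := cov x Kx.
  have hs : has (fun y => `[< B y x >]) s by apply/hasP; exists y => //; exact/asboolP.
  have ks := hs; rewrite has_find in ks.
  exists (Ordinal ks) => //; split.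
    by split => //; apply/asboolP/(nth_find x0 hs).
  by move=> [l /= lk Blx]; have /asboolPn := before_find x0 lk.
- move=> k x [[_ /interior_subset]]; by rewrite ballEmdist.
Qed.

Lemma compact_maxm_image m (f : ('I_m -> X) -> X) (K : set X) :
  maxm_continuous f -> compact K -> compact (f @` rectangle (fun=> K)).
Proof.
move=> cf cK; have := tychonoff (T := fun _ : 'I_m => X) (fun _ => cK).
apply: continuous_compact; apply: continuous_subspaceT => x.
apply/(@cvg_ballP _ _ _ _ (nbhs_filter x)) => e e0.
have [d d0 hd] := cf x e e0.
have near_x : \forall y \near x, forall i : 'I_m, ball (x i) d (y i).
  apply: (@filter_forall _ _ _ (nbhs x) (nbhs_filter x)) => i.
  by have := @cvg_ball _ _ _ _ (nbhs_filter x) (@proj _ (fun _ : 'I_m => X) i)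
    (x i) (@proj_continuous _ (fun _ : 'I_m => X) i x) d d0.
apply: filterS near_x => y hy; rewrite ballEmdist /=; apply: hd => i.
by have := hy i; rewrite ballEmdist.
Qed.

End compact_partition.

Section discrete_kantorovich.
Context {R : realType} {X : metricType R}.

Lemma Lip1_extension n (c : 'I_n -> X) (G : 'I_n -> R) :
  (forall k k', G k - G k' <= mdist (c k) (c k')) ->
  exists2 F : X -> R, Lip1 F & forall k, F (c k) = G k.
Proof.
case: n c G => [|n] c G hG.
  by exists (fun=> 0) => [x y|[]//]; rewrite subrr normr0 mdist_ge0.
pose F x := \big[Order.min/(G ord0 + mdist (c ord0) x)]_k (G k + mdist (c k) x).
have Fle x k : F x <= G k + mdist (c k) x by apply: bigmin_le.
have F_shift x y : F x - mdist x y <= F y.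
  have shift k : F x - mdist x y <= G k + mdist (c k) y.
    have := Fle x k; have := metric_triangle (c k) y x.
    by rewrite (metric_sym y x); lra.
  by apply: le_bigmin => [|k _]; apply: shift.
exists F => [x y|k].
  by rewrite ler_norml; have := F_shift x y; have := F_shift y x;
    rewrite (metric_sym y x); lra.
apply/eqP; rewrite eq_le; apply/andP; split.
  by have := Fle (c k) k; rewrite mdistxx addr0.
have bound k' : G k <= G k' + mdist (c k') (c k).
  by have := hG k k'; rewrite metric_sym; lra.
by apply: le_bigmin => [|k' _]; apply: bound.
Qed.

Variables (N : nat) (c : 'I_N -> X) (u v : 'I_N -> R) (E : \bar R).
Hypotheses (u0 : forall k, 0 <= u k) (v0 : forall k, 0 <= v k).
Hypotheses (u1 : \sum_k u k = 1) (v1 : \sum_k v k = 1).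
Hypothesis hE : forall F : X -> R, Lip1 F ->
  (`|\sum_k F (c k) * (u k - v k)|%:E <= E)%E.

Lemma lipschitz_test_bound (G : 'I_N -> R) (b : R) : 0 <= b ->
  (forall k k', `|G k - G k'| <= b * mdist (c k) (c k')) ->
  (`|\sum_k G k * (u k - v k)|%:E <= b%:E * E)%E.
Proof.
move=> b0 hG; have [b_eq0|b_neq0] := eqVneq b 0.
  have [k0 _|none] := pickP (@predT 'I_N); last first.
    by move: u1; rewrite big_pred0 // => /esym/eqP; rewrite oner_eq0.
  rewrite (eq_bigr (fun k => G k0 * (u k - v k))) => [|k _]; last first.
    by have := hG k k0; rewrite b_eq0 mul0r normr_le0 subr_eq0 => /eqP ->.
  by rewrite -mulr_sumr sumrB u1 v1 subrr mulr0 normr0 b_eq0 mul0e.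
have b_gt0 : 0 < b by rewrite lt_neqAle eq_sym b_neq0.
have [F lF FG] : exists2 F : X -> R, Lip1 F & forall k, F (c k) = G k / b.
  apply: Lip1_extension => k k'; rewrite -mulrBl ler_pdivrMr // mulrC.
  exact: le_trans (ler_norm _) (hG k k').
rewrite (eq_bigr (fun k => b * (F (c k) * (u k - v k)))) => [|k _]; last first.
  by rewrite FG mulrA mulrCA divff ?mulr1.
rewrite -mulr_sumr normrM ger0_norm // EFinM.
by apply: lee_wpmul2l; [rewrite lee_fin | exact: hE].
Qed.

Section product_weights.
Variables (m : nat) (a : 'I_m -> R) (g : {ffun 'I_m -> 'I_N} -> R).
Hypothesis a0 : forall i, 0 <= a i.
Hypothesis hg : forall ka ka' : {ffun 'I_m -> 'I_N},
  `|g ka - g ka'| <= \sum_i a i * mdist (c (ka i)) (c (ka' i)).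

Let hybrid (t : 'I_m) (ka : {ffun 'I_m -> 'I_N}) :=
  \prod_(i < m | i != t) (if (i < t)%N then v (ka i) else u (ka i)).

Let hybrid_ge0 t ka : 0 <= hybrid t ka.
Proof. by apply: prodr_ge0 => i _; case: ifP. Qed.

Let hybrid_fiber_sum t k :
  \sum_(ka : {ffun 'I_m -> 'I_N} | ka t == k) hybrid t ka = 1.
Proof.
pose w (i : 'I_m) (y : 'I_N) :=
  if i == t then (y == k)%:R else if (i < t)%N then v y else u y.
have : \prod_i \sum_y w i y = 1.
  apply: big1 => i _; rewrite /w; case: eqP => _; last by case: (i < t)%N.
  by rewrite (bigD1 k) //= eqxx big1 ?addr0 // => y /negbTE ->.
rewrite bigA_distr_bigA /= => <-; rewrite big_mkcond /=.
apply: eq_bigr => ka _; rewrite (bigD1 t) //= /w eqxx.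
case: eqP => _; last by rewrite mul0r.
by rewrite mul1r; apply: eq_bigr => i /negbTE ->.
Qed.

Let telescope_product (ka : {ffun 'I_m -> 'I_N}) :
  \prod_i u (ka i) - \prod_i v (ka i) =
  \sum_(t < m) (u (ka t) - v (ka t)) * hybrid t ka.
Proof.
pose W (t : nat) := \prod_(i < m) (if (i < t)%N then v (ka i) else u (ka i)).
have -> : \prod_(i < m) v (ka i) = W m by apply: eq_bigr => i _; rewrite ltn_ord.
rewrite -[\prod_(i < m) u (ka i)]/(W 0%N) -opprB -(telescope_sumr W (leq0n m)).
rewrite -sumrN big_mkord; apply: eq_bigr => t _.
rewrite opprB /W (bigD1 t) //= [X in _ - X](bigD1 t) //= ltnn ltnSn mulrBl.
congr (_ - _ * _); apply: eq_bigr => i /negbTE it.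
by rewrite ltnS leq_eqVlt val_eqE it.
Qed.

Let marginal t k :=
  \sum_(ka : {ffun 'I_m -> 'I_N} | ka t == k) g ka * hybrid t ka.

Let marginal_lipschitz t k k' :
  `|marginal t k - marginal t k'| <= a t * mdist (c k) (c k').
Proof.
(* Swapping the values [k] and [k'] of coordinate [t] maps the fiber over [k]
   onto the fiber over [k'] and does not change the hybrid weight. *)
pose sg (ka : {ffun 'I_m -> 'I_N}) : {ffun 'I_m -> 'I_N} :=
  [ffun i => if i == t then tperm k k' (ka i) else ka i].
have sgK : involutive sg.
  by move=> ka; apply/ffunP => i; rewrite !ffunE; case: eqP => // ->; rewrite tpermK.
have hybrid_sg ka : hybrid t (sg ka) = hybrid t ka.
  by apply: eq_bigr => i /negbTE it; rewrite ffunE it.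
have -> : marginal t k' =
    \sum_(ka : {ffun 'I_m -> 'I_N} | ka t == k) g (sg ka) * hybrid t (sg ka).
  rewrite /marginal (reindex_inj (inv_inj sgK)) /=; apply: eq_bigl => ka.
  rewrite ffunE eqxx; apply/eqP/eqP => [kt|->]; last exact: tpermL.
  by rewrite -(tpermK k k' (ka t)) kt tpermR.
rewrite -sumrB; apply: (le_trans (ler_norm_sum _ _ _)).
rewrite -[X in _ <= X]mulr1 -(hybrid_fiber_sum t k) mulr_sumr.
apply: ler_sum => ka /eqP kt; rewrite hybrid_sg -mulrBl normrM.
rewrite (ger0_norm (hybrid_ge0 _ _)); apply: ler_wpM2r => //.
apply: (le_trans (hg ka (sg ka))); rewrite (bigD1 t) //= big1 ?addr0.
  by rewrite ffunE eqxx kt tpermL.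
by move=> i /negbTE it; rewrite ffunE it mdistxx mulr0.
Qed.

Lemma product_weights_bound :
  (`|\sum_ka g ka * (\prod_i u (ka i) - \prod_i v (ka i))|%:E
    <= (\sum_i a i)%:E * E)%E.
Proof.
have -> : \sum_ka g ka * (\prod_i u (ka i) - \prod_i v (ka i)) =
    \sum_t \sum_k marginal t k * (u k - v k).
  under eq_bigr do rewrite telescope_product mulr_sumr.
  rewrite exchange_big; apply: eq_bigr => t _.
  rewrite (partition_big (fun ka : {ffun 'I_m -> 'I_N} => ka t) xpredT) //=.
  apply: eq_bigr => k _; rewrite /marginal mulr_suml.
  by apply: eq_bigr => ka /eqP <-; rewrite [(_ - _) * _]mulrC mulrA.
apply: (@le_trans _ _ ((\sum_t `|\sum_k marginal t k * (u k - v k)|)%:E)).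
  by rewrite lee_fin ler_norm_sum.
rewrite -!sumEFin ge0_sume_distrl => [|i _]; last by rewrite lee_fin.
by apply: lee_sum => t _; apply: lipschitz_test_bound => // k k';
  exact: marginal_lipschitz.
Qed.

End product_weights.
End discrete_kantorovich.

Section centred_partition_integrals.
Context {R : realType} {X : metricType R} (x0 : X).
Implicit Types rho mu nu : {measure set (BorelX x0) -> \bar R}.

Lemma centred_partition_ae rho (K : set X) (delta : R) N
    (c : 'I_N -> X) (P : 'I_N -> set X) :
  centred_partition x0 K delta c P -> rho (~` K) = 0%E -> ae_partition rho P.
Proof. by move=> [mP tP <- _] nK. Qed.

Lemma integral_centred_partition rho (K : set X) (delta : R) N
    (c : 'I_N -> X) (P : 'I_N -> set X) (F : X -> R) :
  rho setT = 1%E -> rho (~` K) = 0%E -> centred_partition x0 K delta c P ->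
  0 < delta -> Lip1 F ->
  exists2 r, (\int[rho]_x (F x)%:E)%E = r%:E &
    `|r - \sum_k F (c k) * fine (rho (P k))| <= delta.
Proof.
move=> rho1 nK hP delta0 lF; have [_ _ _ hc] := hP.
apply: integral_ae_partition => //.
- exact: centred_partition_ae hP nK.
- exact: measurable_Lip1.
- exact: ltW.
- by move=> k x /hc dx; rewrite distrC (le_trans (lF _ _)) ?ltW.
Qed.

Lemma Lip1_le_dMK mu nu (F : X -> R) : Lip1 F ->
  (`|\int[mu]_x (F x)%:E - \int[nu]_x (F x)%:E| <= dMK mu nu)%E.
Proof. by move=> lF; apply: ereal_sup_ubound; exists F. Qed.

Lemma dMK_ge0 mu nu : (0 <= dMK mu nu)%E.
Proof.
apply: le_trans (abse_ge0 _) (Lip1_le_dMK mu nu (F := fun=> 0) _) => x y.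
by rewrite subrr normr0 mdist_ge0.
Qed.

End centred_partition_integrals.

Section dMK_partition.
Context {R : realType} {X : metricType R} (x0 : X).
Variables (mu nu : {measure set (BorelX x0) -> \bar R}) (K : set X) (delta : R).
Variables (N : nat) (c : 'I_N -> X) (P : 'I_N -> set X).
Hypotheses (mu1 : mu setT = 1%E) (nu1 : nu setT = 1%E).
Hypotheses (muK : mu (~` K) = 0%E) (nuK : nu (~` K) = 0%E).
Hypotheses (hP : centred_partition x0 K delta c P) (delta0 : 0 < delta).

Lemma dMK_partition_bound (F : X -> R) : Lip1 F ->
  (`|\sum_k F (c k) * (fine (mu (P k)) - fine (nu (P k)))|%:E
    <= dMK mu nu + (2 * delta)%:E)%E.
Proof.
move=> lF; have [r1 i1 b1] := integral_centred_partition mu1 muK hP delta0 lF.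
have [r2 i2 b2] := integral_centred_partition nu1 nuK hP delta0 lF.
have := Lip1_le_dMK mu nu lF; rewrite i1 i2 -EFinB abse_EFin => r12.
apply: le_trans _ (leeD r12 (lexx _)); rewrite -EFinD lee_fin.
under eq_bigr do rewrite mulrBr; rewrite sumrB.
move: b1 b2; rewrite !ler_norml => /andP [? ?] /andP [? ?].
have := ler_norm (r1 - r2); have := ler_norm (r2 - r1); rewrite distrC => ? ?.
apply/andP; split; lra.
Qed.

End dMK_partition.

Section gifs.
Context {R : realType} {X : metricType R} (x0 : X).
Variables (m L : nat) (a : 'I_m -> R) (phi : 'I_L -> ('I_m -> X) -> X).
Variable p : 'I_L -> R.
Hypotheses (a0 : forall i, 0 <= a i) (phi_cont : forall j, maxm_continuous (phi j)).
Hypotheses (p0 : forall j, 0 <= p j) (p1 : \sum_j p j = 1).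
Hypothesis phi_contr : forall j, gifs_contraction a (phi j).

Definition gifs_image (K : set X) : set X := \bigcup_j phi j @` rectangle (fun=> K).

Definition gifs_riemann_sum (rho : {measure set (BorelX x0) -> \bar R}) N
    (c : 'I_N -> X) (P : 'I_N -> set X) (f : X -> R) :=
  \sum_j p j * \sum_(ka : {ffun 'I_m -> 'I_N})
    f (phi j (fun i => c (ka i))) * \prod_i fine (rho (P (ka i))).

Lemma compact_gifs_image (K : set X) : compact K -> compact (gifs_image K).
Proof.
move=> cK; rewrite /gifs_image bigcup_index_enum.
elim: (index_enum _) => [|j s IH]; rewrite ?big_nil ?big_cons; first exact: compact0.
exact: compactU (compact_maxm_image (phi_cont j) cK) IH.
Qed.

Lemma measurable_phi_preimage j (B : set X) : measurable (B : set (BorelX x0)) ->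
  measurable (phi j @^-1` B : set (BorelXm x0 m)).
Proof.
by move=> mB; rewrite -[_ @^-1` _]setTI; apply: measurable_maxm_continuous.
Qed.

Section gifs_measure.
Variables (rho : {measure set (BorelX x0) -> \bar R}) (K : set X).
Variables (pi : {measure set (BorelXm x0 m) -> \bar R}).
Variables (M : {measure set (BorelX x0) -> \bar R}).
Hypotheses (rho1 : rho setT = 1%E) (cK : compact K) (rhoK : rho (~` K) = 0%E).
Hypothesis pi_prod : is_product_measure (fun=> rho) pi.
Hypothesis M_def : forall B, measurable (B : set (BorelX x0)) ->
  M B = (\sum_j (p j)%:E * pi (phi j @^-1` B))%E.

Lemma product_measure_setT : pi setT = 1%E.
Proof.
have := @pi_prod (fun _ => setT) (fun _ => measurableT).
rewrite big1 // => <-.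
by congr (pi _); apply/seteqP.
Qed.

Lemma product_measure_rectangle_compl : pi (~` rectangle (fun=> K)) = 0%E.
Proof.
have mK := measurable_compact (x0 := x0) cK.
apply/(prob_setC_eq0 product_measure_setT); first exact: measurable_rectangle.
by rewrite pi_prod // big1 // => i _; apply/(prob_setC_eq0 rho1 mK).
Qed.

Lemma gifs_measure_setT : M setT = 1%E.
Proof.
rewrite M_def // (eq_bigr (fun j => (p j)%:E)) => [|j _]; first by rewrite sumEFin p1.
by rewrite preimage_setT product_measure_setT mule1.
Qed.

Lemma gifs_measure_image_compl : M (~` gifs_image K) = 0%E.
Proof.
have mK := measurable_compact (x0 := x0) cK.
have mK' := measurable_compact (x0 := x0) (compact_gifs_image cK).
rewrite M_def; last exact: measurableC.
apply: big1 => j _; rewrite (subset_measure0 _ _ _ product_measure_rectangle_compl).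
- by rewrite mule0.
- by apply: measurable_phi_preimage; exact: measurableC.
- by apply: measurableC; apply: measurable_rectangle.
- by move=> x nK' Kx; apply: nK'; exists j => //; exists x.
Qed.

Lemma gifs_measure_in_PX : in_PX M.
Proof.
split; first exact: gifs_measure_setT.
exists (gifs_image K); split; first exact: compact_gifs_image.
exact: gifs_measure_image_compl.
Qed.

Lemma ae_partition_phi_preimage j N (e : 'I_N -> X) (Q : 'I_N -> set X)
    (delta : R) :
  centred_partition x0 (gifs_image K) delta e Q ->
  ae_partition pi (fun l => phi j @^-1` Q l).
Proof.
move=> [mQ tQ UQ _]; split.
- by move=> l; exact: measurable_phi_preimage.
- by move=> l l' _ _ [x [Qx Qx']]; apply: tQ => //; exists (phi j x).
apply: (subset_measure0 _ _ _ product_measure_rectangle_compl).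
- apply: measurableC; apply: measurable_bigcup_finType => l.
  exact: measurable_phi_preimage.
- apply: measurableC; apply: measurable_rectangle => _.
  exact: measurable_compact.
move=> x nQ Kx; apply: nQ; have : gifs_image K (phi j x) by exists j => //; exists x.
by rewrite -UQ => -[l _ Qlx]; exists l.
Qed.

Variables (N : nat) (c : 'I_N -> X) (P : 'I_N -> set X) (delta : R).
Hypotheses (hP : centred_partition x0 K delta c P) (delta0 : 0 < delta).

Let cell (ka : {ffun 'I_m -> 'I_N}) := rectangle (fun i => P (ka i)).

Lemma ae_partition_cells : ae_partition pi cell.
Proof.
have [mP tP UP _] := hP; split.
- by move=> ka; apply: measurable_rectangle => i; exact: mP.
- move=> ka ka' _ _ [x [hx hx']]; apply/ffunP => i.
  by apply: tP => //; exists (x i); split; [exact: hx | exact: hx'].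
apply: (subset_measure0 _ _ _ product_measure_rectangle_compl).
- apply: measurableC; apply: measurable_bigcup_finType => ka.
  exact: measurable_rectangle.
- by apply: measurableC; apply: measurable_rectangle => _; exact: measurable_compact.
move=> x ncell Kx; apply: ncell.
have hk i : exists k, P k (x i) by move: (Kx i); rewrite -UP => -[k _ Pk]; exists k.
exists [ffun i => sval (cid (hk i))] => // i; rewrite ffunE.
exact: svalP (cid (hk i)).
Qed.

Lemma fine_cell ka : fine (pi (cell ka)) = \prod_i fine (rho (P (ka i))).
Proof.
have [mP _ _ _] := hP; rewrite /cell pi_prod //.
rewrite -[RHS]/(fine (\prod_i fine (rho (P (ka i))))%:E) -prodEFin.
by congr fine; apply: eq_bigr => i _; rewrite fineK // fin_num_prob.
Qed.

Lemma fine_gifs_measure (B : set X) : measurable (B : set (BorelX x0)) ->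
  fine (M B) = \sum_j p j * fine (pi (phi j @^-1` B)).
Proof.
move=> mB; rewrite M_def // -[RHS]/(fine (\sum_j p j * fine (pi _))%:E).
rewrite -sumEFin; congr fine; apply: eq_bigr => j _.
rewrite EFinM fineK // (fin_num_prob product_measure_setT) //.
exact: measurable_phi_preimage.
Qed.

Lemma gifs_partition_sum_approx N' (e : 'I_N' -> X) (Q : 'I_N' -> set X)
    (f : X -> R) :
  centred_partition x0 (gifs_image K) delta e Q -> Lip1 f ->
  `|\sum_l f (e l) * fine (M (Q l)) - gifs_riemann_sum rho c P f|
    <= delta + \sum_i a i * delta.
Proof.
move=> hQ lf; have [mQ _ _ hQe] := hQ; have [_ _ _ hPc] := hP.
under eq_bigr => l _ do rewrite (fine_gifs_measure (mQ l)) mulr_sumr.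
rewrite exchange_big /= -sumrB; apply: (le_trans (ler_norm_sum _ _ _)).
apply: (@le_trans _ _ (\sum_j p j * (delta + \sum_i a i * delta)));
  last by rewrite -mulr_suml p1 mul1r.
apply: ler_sum => j _.
under eq_bigr do rewrite mulrCA; rewrite -mulr_sumr -mulrBr normrM ger0_norm //.
apply: ler_wpM2l => //; under [X in _ - X]eq_bigr do rewrite -fine_cell.
apply: (ae_partition_sum_diff product_measure_setT (ae_partition_phi_preimage j hQ)
  ae_partition_cells) => l ka x Qx cellx.
apply: le_trans (ler_distD (f (phi j x)) _ _) _; apply: lerD.
  by apply: le_trans (lf _ _) _; apply/ltW/hQe.
apply: le_trans (lf _ _) _; apply: le_trans (phi_contr j _ _) _.
apply: ler_sum => i _; apply: ler_wpM2l => //.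
by rewrite metric_sym; apply/ltW/(hPc _ _ (cellx i)).
Qed.

Lemma integral_gifs_measure (f : X -> R) : Lip1 f ->
  exists2 r, (\int[M]_x (f x)%:E)%E = r%:E &
    `|r - gifs_riemann_sum rho c P f| <= (2 + \sum_i a i) * delta.
Proof.
move=> lf; have cK' := compact_gifs_image cK.
have [N' [e [Q hQ]]] := compact_centred_partition x0 cK' delta0.
have [r ir br] := integral_centred_partition gifs_measure_setT
  gifs_measure_image_compl hQ delta0 lf.
exists r => //.
apply: le_trans (ler_distD (\sum_l f (e l) * fine (M (Q l))) _ _) _.
by have := gifs_partition_sum_approx hQ lf; move: br; rewrite -mulr_suml; lra.
Qed.

End gifs_measure.

Section two_measures.
Variables (mu nu : {measure set (BorelX x0) -> \bar R}) (K : set X).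
Hypotheses (mu1 : mu setT = 1%E) (nu1 : nu setT = 1%E) (cK : compact K).
Hypotheses (muK : mu (~` K) = 0%E) (nuK : nu (~` K) = 0%E).

Lemma gifs_riemann_sum_dMK N (c : 'I_N -> X) (P : 'I_N -> set X) (delta : R)
    (f : X -> R) :
  centred_partition x0 K delta c P -> 0 < delta -> Lip1 f ->
  (`|gifs_riemann_sum mu c P f - gifs_riemann_sum nu c P f|%:E
    <= (\sum_i a i)%:E * (dMK mu nu + (2 * delta)%:E))%E.
Proof.
move=> hP delta0 lf.
have hE := dMK_partition_bound mu1 nu1 muK nuK hP delta0.
have w0 (rho : {measure set (BorelX x0) -> \bar R}) k : 0 <= fine (rho (P k)).
  exact/fine_ge0/measure_ge0.
have w1 := ae_partition_sum1 mu1 (centred_partition_ae hP muK).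
have w1' := ae_partition_sum1 nu1 (centred_partition_ae hP nuK).
pose T j := \sum_(ka : {ffun 'I_m -> 'I_N}) f (phi j (fun i => c (ka i))) *
  (\prod_i fine (mu (P (ka i))) - \prod_i fine (nu (P (ka i)))).
have T_bound j : (`|T j|%:E <= (\sum_i a i)%:E * (dMK mu nu + (2 * delta)%:E))%E.
  apply: (product_weights_bound (w0 mu) (w0 nu) w1 w1' hE a0) => ka ka'.
  exact: le_trans (lf _ _) (phi_contr j _ _).
have -> : gifs_riemann_sum mu c P f - gifs_riemann_sum nu c P f = \sum_j p j * T j.
  rewrite -sumrB; apply: eq_bigr => j _; rewrite -mulrBr -sumrB.
  by congr (_ * _); apply: eq_bigr => ka _; rewrite mulrBr.
apply: (@le_trans _ _ ((\sum_j p j * `|T j|)%:E)).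
  rewrite lee_fin; apply: (le_trans (ler_norm_sum _ _ _)); apply: ler_sum => j _.
  by rewrite normrM ger0_norm.
rewrite -sumEFin; apply: (@le_trans _ _ (\sum_j (p j)%:E *
  ((\sum_i a i)%:E * (dMK mu nu + (2 * delta)%:E)))%E).
  by apply: lee_sum => j _; rewrite EFinM; apply: lee_wpmul2l; rewrite ?lee_fin.
by rewrite -ge0_sume_distrl => [|j _]; rewrite ?lee_fin // sumEFin p1 mul1e.
Qed.

Variables (pimu pinu : {measure set (BorelXm x0 m) -> \bar R}).
Variables (Mmu Mnu : {measure set (BorelX x0) -> \bar R}).
Hypotheses (pimu_prod : is_product_measure (fun=> mu) pimu)
  (pinu_prod : is_product_measure (fun=> nu) pinu).
Hypotheses (Mmu_def : forall B, measurable (B : set (BorelX x0)) ->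
  Mmu B = (\sum_j (p j)%:E * pimu (phi j @^-1` B))%E)
  (Mnu_def : forall B, measurable (B : set (BorelX x0)) ->
  Mnu B = (\sum_j (p j)%:E * pinu (phi j @^-1` B))%E).

Lemma gifs_integral_dMK (f : X -> R) (eps : R) : Lip1 f -> 0 < eps ->
  (`|\int[Mmu]_x (f x)%:E - \int[Mnu]_x (f x)%:E|
    <= (\sum_i a i)%:E * dMK mu nu + eps%:E)%E.
Proof.
move=> lf eps0; set s := \sum_i a i; have s0 : 0 <= s by exact: sumr_ge0.
(* Each integral is within (2 + s) delta of its Riemann sum, and the Riemann
   sums are within s (d_MK + 2 delta) of each other. *)
pose delta := eps / (4 + 4 * s).
have delta0 : 0 < delta by rewrite divr_gt0 //; lra.
have [N [c [P hP]]] := compact_centred_partition x0 cK delta0.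
have [r1 i1 b1] := integral_gifs_measure mu1 cK muK pimu_prod Mmu_def hP delta0 lf.
have [r2 i2 b2] := integral_gifs_measure nu1 cK nuK pinu_prod Mnu_def hP delta0 lf.
have hR := gifs_riemann_sum_dMK hP delta0 lf.
rewrite i1 i2 -EFinB abse_EFin.
apply: (@le_trans _ _ ((2 * (2 + s) * delta)%:E +
  `|gifs_riemann_sum mu c P f - gifs_riemann_sum nu c P f|%:E)%E).
  rewrite -EFinD lee_fin.
  apply: le_trans (ler_distD (gifs_riemann_sum mu c P f) _ _) _.
  apply: le_trans (lerD (lexx _) (ler_distD (gifs_riemann_sum nu c P f) _ _)) _.
  by move: b1 b2; rewrite -/s (distrC _ r2); lra.
apply: le_trans (leeD2l _ hR) _.
rewrite ge0_muleDr; [|exact: dMK_ge0|by rewrite lee_fin mulr_ge0 // ltW].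
rewrite -/s -EFinM addeCA -EFinD leeD2l // lee_fin.
suff -> : 2 * (2 + s) * delta + s * (2 * delta) = eps by [].
by rewrite /delta; field; rewrite gt_eqF //; lra.
Qed.

End two_measures.
End gifs.

Theorem mainTheorem2 (R : realType) (X : metricType R) (x0 : X) (m L : nat)
  (a : 'I_m -> R) (phi : 'I_L -> ('I_m -> X) -> X) (p : 'I_L -> R) :
  (0 < m)%N ->
  (forall i, 0 <= a i) -> \sum_(i < m) a i < 1 ->
  (forall j, maxm_continuous (phi j)) ->
  (forall j, 0 < p j) -> \sum_(j < L) p j = 1 ->
  (forall j, gifs_contraction a (phi j)) ->
  forall (mu nu : {measure set (BorelX x0) -> \bar R})
         (pimu pinu : {measure set (BorelXm x0 m) -> \bar R})
         (Mmu Mnu : {measure set (BorelX x0) -> \bar R}),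
  in_PX mu -> in_PX nu ->
  is_product_measure (fun _ => mu) pimu ->
  is_product_measure (fun _ => nu) pinu ->
  (forall B, measurable (B : set (BorelX x0)) ->
     Mmu B = (\sum_(j < L) (p j)%:E * pimu (phi j @^-1` B))%E) ->
  (forall B, measurable (B : set (BorelX x0)) ->
     Mnu B = (\sum_(j < L) (p j)%:E * pinu (phi j @^-1` B))%E) ->
  [/\ in_PX Mmu, in_PX Mnu &
      (dMK Mmu Mnu <= (\sum_(i < m) a i)%:E * dMK mu nu)%E].
Proof.
move=> _ a0 _ phi_cont p_gt0 p1 contr mu nu pimu pinu Mmu Mnu
  [mu1 [Kmu [cKmu muKmu]]] [nu1 [Knu [cKnu nuKnu]]] pimu_prod pinu_prod Mmu_def Mnu_def.
have p0 j : 0 <= p j := ltW (p_gt0 j).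
have cK : compact (Kmu `|` Knu) := compactU cKmu cKnu.
have null_compl (rho : {measure set (BorelX x0) -> \bar R}) K :
    K `<=` Kmu `|` Knu -> compact K -> rho (~` K) = 0%E ->
    rho (~` (Kmu `|` Knu)) = 0%E.
  move=> KU cK' nK; apply: (subset_measure0 _ _ _ nK); last exact: subsetC.
  - by apply: measurableC; exact: measurable_compact.
  - by apply: measurableC; exact: measurable_compact.
have muK := null_compl mu Kmu (@subsetUl _ _ _) cKmu muKmu.
have nuK := null_compl nu Knu (@subsetUr _ _ _) cKnu nuKnu.
split.
- exact: (gifs_measure_in_PX phi_cont p1 mu1 cK muK pimu_prod Mmu_def).
- exact: (gifs_measure_in_PX phi_cont p1 nu1 cK nuK pinu_prod Mnu_def).
apply: ge_ereal_sup => _ [f lf <-]; apply/lee_addgt0Pr => eps eps0.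
exact: (gifs_integral_dMK a0 phi_cont p0 p1 contr mu1 nu1 cK muK nuK
  pimu_prod pinu_prod Mmu_def Mnu_def lf eps0).
Qed.
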